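(* Let $A$ be a finitely Jacobson ring and $a\in A$. Let $B$ be a good $A$-algebra such that $B_a=B[1/a]$ is integral over $A_a=A[1/a]$. Then $a\cdot \mathrm{Jac}_B J\subseteq \mathrm{Nil}_B J$ for every finitely generated ideal $J$ of $B$.
   Context: All rings are commutative with identity. The setting is constructive mathematics: no law of excluded middle and no Zorn's lemma. For a ring $A$ and a subset $U\subseteq A$, $\langle U\rangle_A$ denotes the ideal generated by $U$. Define $\mathrm{Nil}_A U:=\{a\in A:\exists n\ge 0,\ a^n\in\langle U\rangle_A\}$ and $\mathrm{Jac}_A U:=\{a\in A:\forall b\in A,\ 1\in\langle U\cup\{1-ab\}\rangle_A\}$. A ring $A$ is called finitely Jacobson if every finitely generated ideal $I$ of $A$ satisfies $\mathrm{Jac}_A I\subseteq \mathrm{Nil}_A I$. An $A$-algebra $(B,\varphi:A\to B)$ is called good if for every finitely generated ideal $J$ of $B$, the ideal $\varphi^{-1}(J)\subseteq A$ is finitely generated. *)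

From HB Require Import structures.
From mathcomp Require Import all_boot all_order all_algebra.
Set Implicit Arguments. Unset Strict Implicit. Unset Printing Implicit Defensive.
Import GRing.Theory.
Local Open Scope ring_scope.

Definition in_ideal (R : comPzRingType) (U : R -> Prop) (x : R) : Prop :=
  exists (n : nat) (g : 'I_n -> R) (c : 'I_n -> R),
    (forall i, U (g i)) /\ x = \sum_(i < n) c i * g i.

Definition fin_gen_ideal (R : comPzRingType) (I : R -> Prop) : Prop :=
  exists (n : nat) (g : 'I_n -> R),
    forall x, I x <-> in_ideal (fun y => exists i, y = g i) x.

Definition NilR (R : comPzRingType) (U : R -> Prop) (x : R) : Prop :=
  exists n : nat, in_ideal U (x ^+ n).

Definition JacR (R : comPzRingType) (U : R -> Prop) (x : R) : Prop :=
  forall b : R, in_ideal (fun y => U y \/ y = 1 - x * b) 1.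

Definition finitely_Jacobson (R : comPzRingType) : Prop :=
  forall I : R -> Prop, fin_gen_ideal I -> forall x, JacR I x -> NilR I x.

Definition good (A B : comPzRingType) (phi : {rmorphism A -> B}) : Prop :=
  forall J : B -> Prop, fin_gen_ideal J -> fin_gen_ideal (fun x => J (phi x)).

(* Localization R[1/s]: an element is represented by a pair (r, k), meaning
   r / s^k; two representatives are equal in R[1/s] iff
   s^e (r * s^l - r' * s^k) = 0 for some e. *)
Section Loc.
Variables (R : comPzRingType) (s : R).
Definition loc_eq (x y : R * nat) : Prop :=
  exists e : nat, s ^+ e * (x.1 * s ^+ y.2 - y.1 * s ^+ x.2) = 0.
Definition loc_add (x y : R * nat) : R * nat :=
  (x.1 * s ^+ y.2 + y.1 * s ^+ x.2, (x.2 + y.2)%N).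
Definition loc_mul (x y : R * nat) : R * nat := (x.1 * y.1, (x.2 + y.2)%N).
Definition loc_zero : R * nat := (0, 0%N).
Definition loc_one : R * nat := (1, 0%N).
Definition loc_exp (x : R * nat) (n : nat) : R * nat := iter n (loc_mul x) loc_one.
End Loc.

(* B[1/phi a] is integral over A[1/a]: every element y of B[1/phi a] is a root
   of a monic polynomial  X^n + sum_{i<n} c_i X^i  whose coefficients c_i are
   images of elements of A[1/a] under the induced map A[1/a] -> B[1/phi a],
   (alpha, k) |-> (phi alpha, k). *)
Definition loc_integral (A B : comPzRingType) (phi : {rmorphism A -> B}) (a : A)
  : Prop :=
  let s := phi a in
  forall y : B * nat, exists (n : nat) (c : 'I_n -> A * nat),
    loc_eq s
      (loc_add s (loc_exp y n)
         (\big[loc_add s/@loc_zero B]_(i < n)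
             loc_mul (phi (c i).1, (c i).2) (loc_exp y i)))
      (@loc_zero B).

From HB Require Import structures.
From mathcomp Require Import all_boot all_order all_algebra.
From mathcomp Require Import ring.
Set Implicit Arguments. Unset Strict Implicit. Unset Printing Implicit Defensive.
Import GRing.Theory.
Local Open Scope ring_scope.

(* By integrality, x satisfies a relation
     P(x) = a^E x^n + g_{n-1} x^{n-1} + ... + g_0 = 0  with  g_i in A.
   We show, by induction on n, that P(x) in J forces (a x)^m in J for some m.
   Write P(x) = x r + g_0. For every b, the element 1 - x r (a b) is a unit
   modulo J since x is in Jac J, hence so is 1 - g_0 a b; integrality of
   B[1/a] over A[1/a] descends this to: a^N is in phi^-1(J) + (1 - g_0 a b),
   and a geometric series then makes 1 - g_0 a b a unit modulo phi^-1(J).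
   So a g_0 lies in Jac phi^-1(J), a finitely generated ideal since B is good,
   and as A is finitely Jacobson (a g_0)^m is in phi^-1(J). Hence
   (a x r)^m = (a (P(x) - g_0))^m is in J. Finally r has the same shape in
   degree n - 1, and x is still in Jac (J + rB), so by induction (a x)^k is in
   J + rB, and then (a x)^(k m + m) is in J. *)

Section Ideals.
Variable R : comPzRingType.
Implicit Types (J K U : R -> Prop) (x y z : R).

Definition ideal J :=
  [/\ J 0, (forall x y, J x -> J y -> J (x + y)) & (forall r x, J x -> J (r * x))].

Lemma ideal0 J : ideal J -> J 0.
Proof. by case. Qed.

Lemma idealD J x y : ideal J -> J x -> J y -> J (x + y).
Proof. by case=> _ H _; apply: H. Qed.

Lemma idealM J r x : ideal J -> J x -> J (r * x).
Proof. by case=> _ _ H; apply: H. Qed.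

Lemma idealMr J r x : ideal J -> J x -> J (x * r).
Proof. by move=> HJ Hx; rewrite mulrC; apply: idealM. Qed.

Lemma idealN J x : ideal J -> J x -> J (- x).
Proof. by move=> HJ Hx; rewrite -mulN1r; apply: idealM. Qed.

Lemma ideal_sum J n (F : 'I_n -> R) :
  ideal J -> (forall i, J (F i)) -> J (\sum_(i < n) F i).
Proof.
move=> HJ HF; apply: (big_ind J); [exact: ideal0 | | by move=> i _].
by move=> x y; apply: idealD.
Qed.

Lemma in_ideal_ideal U : ideal (in_ideal U).
Proof.
split.
- exists 0%N, (fun _ => 0), (fun _ => 0); split; first by case.
  by rewrite big_ord0.
- move=> x y [n1 [g1 [c1 [Hg1 ->]]]] [n2 [g2 [c2 [Hg2 ->]]]].
  exists (n1 + n2)%N, (fun i => match split i with inl j => g1 j | inr j => g2 j end),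
    (fun i => match split i with inl j => c1 j | inr j => c2 j end); split.
    by move=> i; case: (split i).
  rewrite big_split_ord /=; congr (_ + _); apply: eq_bigr => i _.
    by rewrite (unsplitK (inl _ : 'I_n1 + 'I_n2)).
  by rewrite (unsplitK (inr _ : 'I_n1 + 'I_n2)).
- move=> r x [n [g [c [Hg ->]]]]; exists n, g, (fun i => r * c i); split => //.
  by rewrite mulr_sumr; apply: eq_bigr => i _; rewrite mulrA.
Qed.

Lemma in_ideal_gen U u : U u -> in_ideal U u.
Proof.
move=> Hu; exists 1%N, (fun _ => u), (fun _ => 1); split => //.
by rewrite big_ord1 mul1r.
Qed.

Lemma in_ideal_min U K x :
  ideal K -> (forall u, U u -> K u) -> in_ideal U x -> K x.
Proof.
move=> HK HU [n [g [c [Hg ->]]]]; apply: ideal_sum => // i.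
by apply: idealM => //; apply: HU.
Qed.

Lemma in_ideal_id J x : ideal J -> in_ideal J x <-> J x.
Proof. by move=> HJ; split; [apply: in_ideal_min | apply: in_ideal_gen]. Qed.

Lemma fg_ideal J : fin_gen_ideal J -> ideal J.
Proof.
move=> [n [g Hg]]; have [H0 HD HM] := in_ideal_ideal (fun y => exists i, y = g i).
split; first by apply/Hg.
- by move=> x y /Hg Hx /Hg Hy; apply/Hg; apply: HD.
- by move=> r x /Hg Hx; apply/Hg; apply: HM.
Qed.

Definition addI J z := fun y => exists j d, J j /\ y = j + d * z.

Lemma addI_ideal J z : ideal J -> ideal (addI J z).
Proof.
move=> HJ; split.
- by exists 0, 0; split; [apply: ideal0 | rewrite mul0r addr0].
- move=> x y [j1 [d1 [H1 ->]]] [j2 [d2 [H2 ->]]]; exists (j1 + j2), (d1 + d2).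
  by split; [apply: idealD | ring].
- move=> r x [j [d [H ->]]]; exists (r * j), (r * d).
  by split; [apply: idealM | ring].
Qed.

Lemma addI_l J z x : J x -> addI J z x.
Proof. by move=> Hx; exists x, 0; rewrite mul0r addr0. Qed.

Lemma addI_r J z : ideal J -> addI J z z.
Proof. by move=> HJ; exists 0, 1; split; [apply: ideal0 | rewrite add0r mul1r]. Qed.

Lemma addIS J K z x : (forall y, J y -> K y) -> addI J z x -> addI K z x.
Proof. by move=> sJK [j [d [Hj ->]]]; exists j, d; split => //; apply: sJK. Qed.

Lemma in_ideal_addI J z w : ideal J ->
  in_ideal (fun y => J y \/ y = z) w <-> addI J z w.
Proof.
move=> HJ; split.
  apply: in_ideal_min; first exact: addI_ideal.
  by move=> u [Hu| ->]; [apply: addI_l | apply: addI_r].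
move=> [j [d [Hj ->]]]; apply: idealD; first exact: in_ideal_ideal.
  by apply: in_ideal_gen; left.
by apply: idealM; [apply: in_ideal_ideal | apply: in_ideal_gen; right].
Qed.

Lemma fg_addI J z : fin_gen_ideal J -> fin_gen_ideal (addI J z).
Proof.
move=> HJg; have HJ := fg_ideal HJg; have Hin := @in_ideal_ideal.
case: HJg => n [g Hg].
pose g' (i : 'I_n.+1) := if unlift ord0 i is Some j then g j else z.
exists n.+1, g' => x; split.
  move=> [j [d [/Hg Hj ->]]]; apply: idealD; first exact: Hin.
    apply: in_ideal_min Hj; first exact: Hin.
    by move=> u [i ->]; apply: in_ideal_gen; exists (lift ord0 i); rewrite /g' liftK.
  apply: idealM; first exact: Hin.
  by apply: in_ideal_gen; exists ord0; rewrite /g' unlift_none.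
apply: in_ideal_min; first exact: addI_ideal.
move=> u [i ->]; rewrite /g'; case: (unlift ord0 i) => [j|]; last exact: addI_r.
by apply: addI_l; apply/Hg; apply: in_ideal_gen; exists j.
Qed.

Lemma JacR_addI J x : ideal J -> JacR J x <-> forall b, addI J (1 - x * b) 1.
Proof. by move=> HJ; split=> Hx b; apply/in_ideal_addI => //; apply: Hx. Qed.

Lemma JacR_addIS J z x : ideal J -> JacR J x -> JacR (addI J z) x.
Proof.
move=> HJ /(JacR_addI _ HJ) Hx; apply/JacR_addI; first exact: addI_ideal.
by move=> b; apply: addIS (Hx b); apply: addI_l.
Qed.

Lemma ideal_expD J y p m : ideal J -> J p -> J ((y + p) ^+ m - y ^+ m).
Proof.
move=> HJ Hp; rewrite subrXX; apply: idealMr => //.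
by rewrite addrAC subrr add0r.
Qed.

Lemma ideal_exp_shift J u p m : ideal J -> J p -> J (u ^+ m) -> J ((u + p) ^+ m).
Proof.
move=> HJ Hp Hu; rewrite -(subrK (u ^+ m) ((u + p) ^+ m)).
by apply: idealD => //; apply: ideal_expD.
Qed.

Lemma ideal_expr1 J q k : ideal J -> J (q - 1) -> J (q ^+ k - 1).
Proof.
by move=> HJ /(ideal_expD 1 k HJ); rewrite expr1n [1 + _]addrC subrK.
Qed.

(* The geometric series 1 + s y + ... + (s y)^(N-1) is an inverse of 1 - s y
   modulo (s y)^N = s^N y^N. *)
Lemma addI_one_of_exp J s y N : ideal J ->
  addI J (1 - s * y) (s ^+ N) -> addI J (1 - s * y) 1.
Proof.
move=> HJ [i [d [Hi EN]]]; set S := \sum_(k < N) (s * y) ^+ k.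
have Egeom : 1 = (s * y) ^+ N + (1 - s * y) * S.
  by rewrite -opprB mulNr -subrX1; ring.
exists (i * y ^+ N), (d * y ^+ N + S); split; first exact: idealMr.
by rewrite {1}Egeom exprMn EN; ring.
Qed.

Lemma ideal_exp_addI J y r k m : ideal J ->
  addI J r (y ^+ k) -> J ((y * r) ^+ m) -> J (y ^+ (k * m + m)).
Proof.
move=> HJ [j [d [Hj Ek]]] Hyr.
have -> : y ^+ (k * m + m) = (d * (y * r) + j * y) ^+ m.
  by rewrite exprD exprM -exprMn Ek; congr (_ ^+ _); ring.
apply: ideal_exp_shift; [exact: HJ | exact: idealMr |].
by rewrite exprMn; apply: idealM.
Qed.

End Ideals.

Lemma loc_sum_num (R : comPzRingType) (s : R) n (F : 'I_n -> R * nat) :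
  exists d : nat -> nat,
    (\big[loc_add s/@loc_zero R]_(i < n) F i).1 = \sum_(i < n) (F i).1 * s ^+ d i.
Proof.
elim: n F => [|n IH] F; first by exists (fun _ => 0%N); rewrite !big_ord0.
have [d Hd] := IH (fun i => F (lift ord0 i)).
set rest := \big[_/_]_(i < n) _ in Hd.
exists (fun j => if j is j'.+1 then (d j' + (F ord0).2)%N else rest.2).
rewrite big_ord_recl big_ord_recl -/rest /loc_add /= Hd mulr_suml; congr (_ + _).
by apply: eq_bigr => i _; rewrite exprD mulrA add0n.
Qed.

Lemma loc_exp_den0 (R : comPzRingType) (v : R) i : loc_exp (v, 0%N) i = (v ^+ i, 0%N).
Proof.
by elim: i => [|i IH] //; rewrite /loc_exp /= -/(loc_exp _ _) IH /loc_mul exprS.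
Qed.

Section Descent.
Variables (A B : comPzRingType) (phi : {rmorphism A -> B}) (a : A).
Hypothesis integral_a : loc_integral phi a.
Implicit Types (J : B -> Prop).

Lemma preim_ideal J : ideal J -> ideal (fun y => J (phi y)).
Proof.
move=> HJ; split.
- by rewrite rmorph0; apply: ideal0.
- by move=> x y Hx Hy; rewrite rmorphD; apply: idealD.
- by move=> r x Hx; rewrite rmorphM; apply: idealM.
Qed.

(* Clearing the denominators of an integral equation over A[1/a]. *)
Lemma loc_integral_rel v :
  exists n E (g : 'I_n -> A),
    phi a ^+ E * v ^+ n + \sum_(i < n) phi (g i) * v ^+ i = 0.
Proof.
have [n [c [e He]]] := integral_a (v, 0%N).
set F := fun i : 'I_n => loc_mul (phi (c i).1, (c i).2) (loc_exp (v, 0%N) i).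
have [d Hd] := loc_sum_num (phi a) F.
set K := (\big[loc_add (phi a)/loc_zero B]_(i < n) F i).2.
move: He; rewrite /loc_add /= Hd loc_exp_den0 -/K /= expr0 !mulr1 mul0r subr0 => He.
exists n, (e + K)%N, (fun i => a ^+ e * (c i).1 * a ^+ d i).
rewrite -[RHS]He mulrDr mulr_sumr exprD; congr (_ + _); first by ring.
by apply: eq_bigr => i _; rewrite /F /= loc_exp_den0 /= !rmorphM !rmorphXn; ring.
Qed.

(* If phi t is a unit modulo J, then t is a unit modulo phi^-1(J) after
   inverting a: multiply the integral equation of its inverse v by (phi t)^n. *)
Lemma loc_integral_unit_preim J t : ideal J ->
  addI J (phi t) 1 -> exists N, addI (fun y => J (phi y)) t (a ^+ N).
Proof.
move=> HJ [j [v [Hj E1]]].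
have [n [E [g Hrel]]] := loc_integral_rel v.
set w := phi t; set q := v * w; set c := fun i : 'I_n => phi (g i) * w ^+ (n - i).
have Hq k : J (q ^+ k - 1).
  by apply: ideal_expr1 => //; rewrite {1}E1 opprD addrCA subrr addr0; apply: idealN.
have Ew : phi a ^+ E * q ^+ n + \sum_(i < n) c i * q ^+ i = 0.
  rewrite -[RHS](mulr0 (w ^+ n)) -[X in _ = _ * X]Hrel mulrDr mulr_sumr /q exprMn.
  congr (_ + _); first by ring.
  apply: eq_bigr => i _.
  have -> : w ^+ n = w ^+ (n - i) * w ^+ i by rewrite -exprD subnK // ltnW.
  by rewrite /c exprMn; ring.
set s0 := \sum_(i < n) g i * t ^+ (n - i.+1).
exists E, (a ^+ E + t * s0), (- s0); split; last by ring.
have -> : phi (a ^+ E + t * s0) = phi a ^+ E + \sum_(i < n) c i.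
  rewrite rmorphD rmorphM rmorphXn rmorph_sum mulr_sumr; congr (_ + _).
  apply: eq_bigr => i _; rewrite /c rmorphM rmorphXn -(subnSK (ltn_ord i)).
  by rewrite exprS /w; ring.
have -> : phi a ^+ E + \sum_(i < n) c i =
    - (phi a ^+ E * (q ^+ n - 1) + \sum_(i < n) c i * (q ^+ i - 1)).
  have -> : \sum_(i < n) c i * (q ^+ i - 1) =
      \sum_(i < n) c i * q ^+ i - \sum_(i < n) c i.
    by rewrite -sumrB; apply: eq_bigr => i _; ring.
  by rewrite -(addKr (phi a ^+ E * q ^+ n) (\sum_(i < n) c i * q ^+ i)) Ew; ring.
apply: idealN => //; apply: idealD => //; first exact: idealM.
by apply: ideal_sum => // i; apply: idealM.
Qed.

Lemma JacR_preim J x r c : ideal J ->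
  JacR J x -> J (x * r + phi c) -> JacR (fun y => J (phi y)) (a * c).
Proof.
move=> HJ /(JacR_addI _ HJ) Hx HP; have HI := preim_ideal HJ.
apply/JacR_addI => // b; rewrite -mulrA.
have [N HN] : exists N, addI (fun y => J (phi y)) (1 - a * (c * b)) (a ^+ N).
  apply: loc_integral_unit_preim => //.
  have [j [d [Hj E1]]] := Hx (- (r * phi (a * b))).
  exists (j + d * (x * r + phi c) * phi (a * b)), d; split.
    by apply: idealD => //; apply: idealMr => //; apply: idealM.
  by rewrite {1}E1 !rmorphM rmorphB rmorph1 !rmorphM; ring.
exact: addI_one_of_exp HI HN.
Qed.

Hypotheses (jacobson_A : finitely_Jacobson A) (good_phi : good phi).

Lemma exp_in_ideal_of_rel n J x E (g : 'I_n -> A) : fin_gen_ideal J -> JacR J x ->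
  J (phi a ^+ E * x ^+ n + \sum_(i < n) phi (g i) * x ^+ i) ->
  exists m, J ((phi a * x) ^+ m).
Proof.
elim: n J g => [|n IH] J g HJg Hx HP; have HJ := fg_ideal HJg.
  exists E; rewrite big_ord0 expr0 mulr1 addr0 in HP.
  by rewrite exprMn; apply: idealMr.
rewrite big_ord_recl expr0 mulr1 in HP.
set c := g ord0 in HP.
set r := phi a ^+ E * x ^+ n + \sum_(i < n) phi (g (lift ord0 i)) * x ^+ i.
have HPr : J (x * r + phi c).
  suff -> : x * r + phi c = phi a ^+ E * x ^+ n.+1 +
      (phi c + \sum_(i < n) phi (g (lift ord0 i)) * x ^+ lift ord0 i) by [].
  rewrite [in RHS](eq_bigr (fun i => x * (phi (g (lift ord0 i)) * x ^+ i))).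
    by rewrite /r mulrDr mulr_sumr exprS; ring.
  by move=> i _; rewrite lift0 exprS; ring.
have [m] := jacobson_A (good_phi HJg) (JacR_preim HJ Hx HPr).
move/(in_ideal_id _ (preim_ideal HJ)); rewrite rmorphXn rmorphM => Hac.
have Haxr : J ((phi a * x * r) ^+ m).
  have -> : phi a * x * r = - (phi a * phi c) + phi a * (x * r + phi c) by ring.
  by apply: ideal_exp_shift; [ | apply: idealM | rewrite exprNn; apply: idealM].
have [k Hk] := IH (addI J r) (fun i => g (lift ord0 i)) (fg_addI r HJg)
  (JacR_addIS r HJ Hx) (addI_r r HJ).
by exists (k * m + m)%N; apply: ideal_exp_addI Hk Haxr.
Qed.

End Descent.

Theorem mainTheorem7 (A B : comPzRingType) (phi : {rmorphism A -> B}) (a : A) :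
  finitely_Jacobson A ->
  good phi ->
  loc_integral phi a ->
  forall J : B -> Prop, fin_gen_ideal J ->
  forall x : B, JacR J x -> NilR J (phi a * x).
Proof.
move=> jacobson_A good_phi integral_a J HJg x Hx; have HJ := fg_ideal HJg.
have [n [E [g Hrel]]] := loc_integral_rel integral_a x.
have [|m Hm] :=
  exp_in_ideal_of_rel integral_a jacobson_A good_phi (E := E) (g := g) HJg Hx.
  by rewrite Hrel; apply: ideal0.
by exists m; apply/in_ideal_id.
Qed.
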